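(* Let $\mathcal{U}$ be the set of all non-trivial parts that appear in some linear clobber game starting from a single part in $\mathcal{A}=\{(\mathtt{ox})^n : n\ge 1\}$. Let $\mathcal{O}=\{\mathtt{o}(\mathtt{xo})^t : t\ge 0\}$, $o\mathcal{A}=\{\mathtt{o}(\mathtt{ox})^t : t\ge 0\}$, $o\mathcal{O}=\{\mathtt{oo}(\mathtt{xo})^t : t\ge 0\}$, $o\mathcal{O}o=\{\mathtt{oo}(\mathtt{xo})^t\mathtt{o} : t\ge 0\}$ and $o\mathcal{A}x=\{\mathtt{o}(\mathtt{ox})^n\mathtt{x} : n\ge 1\}$. Then $\mathcal{U}$ equals the set of non-trivial parts belonging to $$\mathcal{A}\cup\mathcal{O}\cup o\mathcal{A}\cup o\mathcal{O}\cup o\mathcal{O}o\cup o\mathcal{A}x\cup(-\mathcal{O})\cup(-o\mathcal{A})\cup(-o\mathcal{O})\cup(-o\mathcal{O}o).$$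
   Context: Linear clobber is a two-player game (Left owns black stones $\mathtt{x}$, Right owns white stones $\mathtt{o}$) played on a path of cells, each cell empty or holding one stone. On a turn, a player chooses one of their stones that is in a cell adjacent (consecutive on the path) to a cell holding an opponent stone, removes the opponent stone and moves their own stone into that cell, leaving its original cell empty. Players alternate; a player who cannot move loses. A part is a maximal block of consecutive non-empty cells, written as a word over $\{\mathtt{o},\mathtt{x}\}$; a position is the disjoint sum of its parts. A part and its left-right reversal are identified (e.g. $\mathtt{xo}$ is identified with $\mathtt{ox}$). Words are written by concatenation, with exponents denoting repetition. A part is trivial if no two adjacent stones have different colors. For a part $p$, $-p$ is obtained by swapping the colors $\mathtt{o}\leftrightarrow\mathtt{x}$ of every stone, and for a set $X$ of parts, $-X=\{-p : p\in X\}$. A part ''appears in some game starting from'' a part $q$ if it is a part of some position reachable from the position $q$ by a sequence of legal moves (by either player, in any order). *)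

From mathcomp Require Import all_boot.
Set Implicit Arguments. Unset Strict Implicit. Unset Printing Implicit Defensive.

(* Stones: true = black stone x (Left), false = white stone o (Right). *)
Definition sx : bool := true.
Definition so : bool := false.

(* A word over {o,x}: a seq bool.  A board (path of cells): seq (option bool),
   None = empty cell, Some c = stone of colour c. *)
Definition board := seq (option bool).

Definition wpow (w : seq bool) (n : nat) : seq bool := flatten (nseq n w).

Definition wneg (w : seq bool) : seq bool := map negb w.

Definition board_of (w : seq bool) : board := map Some w.

Definition clobber_move (b b' : board) : Prop :=
  exists i j c,
    (j = i.+1 \/ i = j.+1) /\ i < size b /\ j < size b /\
    nth None b i = Some c /\ nth None b j = Some (~~ c) /\
    b' = set_nth None (set_nth None b j (Some c)) i None.

(* reachability by a sequence of legal moves, by either player, any order *)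
Inductive reachable (b : board) : board -> Prop :=
  | reach_refl : reachable b b
  | reach_step b1 b2 : reachable b b1 -> clobber_move b1 b2 -> reachable b b2.

(* w is a part (maximal block of consecutive non-empty cells) of board b *)
Definition is_part (b : board) (w : seq bool) : Prop :=
  w != [::] /\
  exists l r, b = l ++ board_of w ++ r /\
    (l = [::] \/ last None l = None) /\
    (r = [::] \/ head None r = None).

Definition nontrivial (w : seq bool) : Prop :=
  exists i, i.+1 < size w /\ nth so w i != nth so w i.+1.

Definition famA (w : seq bool) : Prop := exists n, 1 <= n /\ w = wpow [:: so; sx] n.
Definition famO (w : seq bool) : Prop := exists t, w = so :: wpow [:: sx; so] t.
Definition fam_oA (w : seq bool) : Prop := exists t, w = so :: wpow [:: so; sx] t.
Definition fam_oO (w : seq bool) : Prop := exists t, w = [:: so; so] ++ wpow [:: sx; so] t.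
Definition fam_oOo (w : seq bool) : Prop :=
  exists t, w = [:: so; so] ++ wpow [:: sx; so] t ++ [:: so].
Definition fam_oAx (w : seq bool) : Prop :=
  exists n, 1 <= n /\ w = so :: wpow [:: so; sx] n ++ [:: sx].

Definition famneg (X : seq bool -> Prop) (w : seq bool) : Prop :=
  exists p, X p /\ w = wneg p.

Definition big_union (w : seq bool) : Prop :=
  famA w \/ famO w \/ fam_oA w \/ fam_oO w \/ fam_oOo w \/ fam_oAx w \/
  famneg famO w \/ famneg fam_oA w \/ famneg fam_oO w \/ famneg fam_oOo w.

(* Parts are identified with their left-right reversals. *)
Definition inU (w : seq bool) : Prop :=
  nontrivial w /\
  exists s, famA s /\ exists b, reachable (board_of s) b /\
    (is_part b w \/ is_part b (rev w)).

(* In (ox)^n, every four consecutive stones have differently coloured middle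
   stones.  A move preserves this: it empties the cell it starts from, so a
   window of four occupied cells after the move avoids that cell and hence
   cannot have the captured cell, its neighbour, in its middle.  So every part
   of a game from (ox)^n alternates except possibly at its two ends, and a case
   analysis on the two end stones, the colour of the alternating core and its
   parity shows that, up to reversal, such non-trivial words are exactly the
   listed families.  Conversely, each family member is cut out of (ox)^n by at
   most one move near each end. *)

From mathcomp Require Import all_boot zify.

Set Implicit Arguments.
Unset Strict Implicit.
Unset Printing Implicit Defensive.

Arguments wpow : simpl never.

Lemma wpowD u m n : wpow u (m + n) = wpow u m ++ wpow u n.
Proof. by rewrite /wpow nseqD flatten_cat. Qed.

Lemma wpowS u n : wpow u n.+1 = u ++ wpow u n.
Proof. by []. Qed.

Lemma wpowSr u n : wpow u n.+1 = wpow u n ++ u.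
Proof. by rewrite -addn1 wpowD /wpow /= cats0. Qed.

Lemma size_wpow u n : size (wpow u n) = size u * n.
Proof. by elim: n => [|n IH]; rewrite ?muln0 // size_cat IH mulnS. Qed.

Lemma map_wpow (f : bool -> bool) u n : map f (wpow u n) = wpow (map f u) n.
Proof. by elim: n => // n IH; rewrite !wpowS map_cat IH. Qed.

Lemma rev_wpow u n : rev (wpow u n) = wpow (rev u) n.
Proof. by elim: n => // n IH; rewrite wpowSr wpowS rev_cat IH. Qed.

Lemma wpow_shift a b n : a :: wpow [:: b; a] n = wpow [:: a; b] n ++ [:: a].
Proof. by elim: n => // n IH; rewrite !wpowS /= IH. Qed.

Lemma wpow_shift_cat a b n s : a :: wpow [:: b; a] n ++ s = wpow [:: a; b] n ++ a :: s.
Proof. by rewrite -cat_cons wpow_shift -catA. Qed.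

(* Proves word identities by pushing [rev] and [wneg] inwards and moving
   isolated letters to the right of the single power [wpow _ k]. *)
Ltac words :=
  rewrite /wneg /so /sx;
  rewrite ?(rev_cat, rev_cons, rev_rcons, rev_wpow, map_cat, map_cons, map_rcons, map_wpow, wpowSr);
  rewrite /rev /=;
  do ?[progress rewrite -?cats1 -?catA ?cats0 ?wpow_shift_cat ?wpow_shift /=].

Fixpoint alt (c : bool) (n : nat) : seq bool :=
  if n is n'.+1 then c :: alt (~~ c) n' else [::].

Lemma alt_double c k : alt c k.*2 = wpow [:: c; ~~ c] k.
Proof. by elim: k c => // k IH c; rewrite doubleS /= IH negbK. Qed.

Lemma alt_double_odd c k : alt c k.*2.+1 = wpow [:: c; ~~ c] k ++ [:: c].
Proof. by rewrite /= alt_double negbK wpow_shift. Qed.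

Lemma alternating_alt s :
    (forall i, i.+1 < size s -> nth so s i != nth so s i.+1) ->
  s = alt (head so s) (size s).
Proof.
elim: s => // c s IH alt_s /=; congr (_ :: _).
case: s IH alt_s => // d s IH alt_s.
suff <-: d = ~~ c by apply: IH => i; exact: alt_s i.+1.
by move: (alt_s 0 isT) => /= {IH alt_s}; case: c; case: d.
Qed.

Definition in_families (w : seq bool) : Prop := big_union w \/ big_union (rev w).

Lemma in_families_rev w : in_families (rev w) -> in_families w.
Proof. by rewrite /in_families revK => -[]; [right | left]. Qed.

Lemma in_families_A n : in_families (wpow [:: so; sx] n.+1).
Proof. by left; left; exists n.+1. Qed.

Lemma in_families_O t : in_families (so :: wpow [:: sx; so] t).
Proof. by left; right; left; exists t. Qed.

Lemma in_families_oA t : in_families (so :: wpow [:: so; sx] t).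
Proof. by left; do 2 right; left; exists t. Qed.

Lemma in_families_oO t : in_families ([:: so; so] ++ wpow [:: sx; so] t).
Proof. by left; do 3 right; left; exists t. Qed.

Lemma in_families_oOo t :
  in_families ([:: so; so] ++ wpow [:: sx; so] t ++ [:: so]).
Proof. by left; do 4 right; left; exists t. Qed.

Lemma in_families_oAx n : in_families (so :: wpow [:: so; sx] n.+1 ++ [:: sx]).
Proof. by left; do 5 right; left; exists n.+1. Qed.

Lemma in_families_nO t : in_families (wneg (so :: wpow [:: sx; so] t)).
Proof. by left; do 6 right; left; eexists; split=> //; exists t. Qed.

Lemma in_families_noA t : in_families (wneg (so :: wpow [:: so; sx] t)).
Proof. by left; do 7 right; left; eexists; split=> //; exists t. Qed.

Lemma in_families_noO t : in_families (wneg ([:: so; so] ++ wpow [:: sx; so] t)).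
Proof. by left; do 8 right; left; eexists; split=> //; exists t. Qed.

Lemma in_families_noOo t :
  in_families (wneg ([:: so; so] ++ wpow [:: sx; so] t ++ [:: so])).
Proof. by left; do 9 right; eexists; split=> //; exists t. Qed.

Ltac family L :=
  first [ by apply: (@eq_ind _ _ in_families L); words
        | by apply: in_families_rev; apply: (@eq_ind _ _ in_families L); words ].

Lemma in_families_odd_core a c b k : in_families (a :: alt c k.*2.+1 ++ [:: b]).
Proof.
(* cases (a, c, b) = xxx, xxo, xox, xoo, oxx, oxo, oox, ooo *)
rewrite alt_double_odd; case: a; case: c; case: b.
- family (in_families_noOo k).
- family (in_families_noA k.+1).
- family (in_families_nO k.+1).
- family (in_families_oA k.+1).
- family (in_families_noA k.+1).
- family (in_families_O k.+1).
- family (in_families_oA k.+1).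
- family (in_families_oOo k).
Qed.

Lemma in_families_even_core a c b k : in_families (a :: alt c k.+1.*2 ++ [:: b]).
Proof.
rewrite alt_double; case: a; case: c; case: b.
- family (in_families_noO k.+1).
- family (in_families_oAx k).
- family (in_families_noO k.+1).
- family (in_families_A k.+1).
- family (in_families_A k.+1).
- family (in_families_oO k.+1).
- family (in_families_oAx k).
- family (in_families_oO k.+1).
Qed.

Lemma in_families_core a c b n : 0 < n -> in_families (a :: alt c n ++ [:: b]).
Proof.
move=> n_gt0; have [k [-> | ->]] : exists k, n = k.*2.+1 \/ n = k.+1.*2.
  by exists n.-1./2; move: (odd_double_half n.-1); case: (odd _) => /=; lia.
- exact: in_families_odd_core.
- exact: in_families_even_core.
Qed.

Definition inner_alternating (w : seq bool) : Prop :=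
  forall i, 0 < i -> i.+2 < size w -> nth so w i != nth so w i.+1.

Lemma inner_alternating_rev w : inner_alternating (rev w) -> inner_alternating w.
Proof.
move=> alt_w i i_gt0 lt_i; have := alt_w (size w - i.+2).
rewrite size_rev !nth_rev ?size_rev; try lia.
have -> : size w - (size w - i.+2).+1 = i.+1 by lia.
have -> : size w - (size w - i.+2).+2 = i by lia.
by rewrite eq_sym; apply; lia.
Qed.

Lemma in_families_inner_alternating w :
  nontrivial w -> inner_alternating w -> in_families w.
Proof.
case: w => [[i []] // | a w]; case/lastP: w => [[[|i] []] // | s b].
case: s => [[[|i] [_ /= a_b]] _ | c s _ alt_w] //.
  by case: a b a_b => -[] // _; [right | left]; left; exists 1.
have alt_cs : forall i, i.+1 < size (c :: s) -> nth so (c :: s) i != nth so (c :: s) i.+1.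
  move=> i lt_i; have := alt_w i.+1 isT; rewrite /= size_rcons -rcons_cons !nth_rcons.
  by move: lt_i => /= lt_i; rewrite !ifT //; [apply; lia | lia].
by rewrite (alternating_alt alt_cs) -cats1; apply: in_families_core.
Qed.

Definition board_inner_alternating (b : board) : Prop :=
  forall k a1 a2 a3 a4,
    nth None b k = Some a1 -> nth None b k.+1 = Some a2 ->
    nth None b k.+2 = Some a3 -> nth None b k.+3 = Some a4 -> a2 != a3.

Lemma nth_board_of_Some w k a :
  nth None (board_of w) k = Some a -> k < size w /\ a = nth so w k.
Proof.
case: (ltnP k (size w)) => [lt_k | le_k]; last by rewrite nth_default ?size_map.
by rewrite /board_of (nth_map so) // => -[<-].
Qed.

Lemma nth_wpow_ox n i : i < 2 * n -> nth so (wpow [:: so; sx] n) i = odd i.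
Proof. by elim: n i => [|n IH] [|[|i]] //= lt_i; rewrite IH //; lia. Qed.

Lemma board_inner_alternating_start n :
  board_inner_alternating (board_of (wpow [:: so; sx] n)).
Proof.
move=> k a1 a2 a3 a4 _ /nth_board_of_Some[lt2 ->] /nth_board_of_Some[lt3 ->] _.
by rewrite size_wpow in lt2 lt3; rewrite !nth_wpow_ox //=; case: (odd k).
Qed.

Lemma board_inner_alternating_move b b' :
  board_inner_alternating b -> clobber_move b b' -> board_inner_alternating b'.
Proof.
move=> alt_b [i [j [c [adj_ij [_ [_ [_ [b_j ->]]]]]]]] k a1 a2 a3 a4.
rewrite !nth_set_nth /= !nth_set_nth /=.
have occupied m a :
    (if m == i then None else if m == j then Some c else nth None b m) = Some a ->
  m != i /\ exists a', nth None b m = Some a'.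
  by case: eqP => // _; case: eqP => [-> | _] e; split=> //; [exists (~~ c) | exists a].
move=> e1 e2 e3 e4.
have [ki [a1' b_k]] := occupied _ _ e1; have [k1i _] := occupied _ _ e2.
have [k2i _] := occupied _ _ e3; have [k3i [a4' b_k3]] := occupied _ _ e4.
have [k1j k2j] : k.+1 != j /\ k.+2 != j.
  by move: ki k1i k2i k3i; case: adj_ij => ->; lia.
move: e2 e3; rewrite (negPf k1i) (negPf k1j) (negPf k2i) (negPf k2j) => b_k1 b_k2.
exact: alt_b b_k b_k1 b_k2 b_k3.
Qed.

Lemma board_inner_alternating_reachable b0 b :
  reachable b0 b -> board_inner_alternating b0 -> board_inner_alternating b.
Proof. by elim=> // b1 b2 _ IH move12 /IH /board_inner_alternating_move; apply. Qed.

Lemma part_inner_alternating b w :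
  board_inner_alternating b -> is_part b w -> inner_alternating w.
Proof.
move=> alt_b [_ [l [r [def_b _]]]] i i_gt0 lt_i; subst b.
have nth_part m : m < size w ->
    nth None (l ++ board_of w ++ r) (size l + m) = Some (nth so w m).
  move=> lt_m; rewrite nth_cat ltnNge leq_addr /= addKn nth_cat size_map lt_m.
  by rewrite (nth_map so).
apply: (alt_b (size l + i.-1)); rewrite -?addnS ?prednK //; apply: nth_part; lia.
Qed.

Lemma set_nth_catl (s r : board) n y :
  n < size s -> set_nth None (s ++ r) n y = set_nth None s n y ++ r.
Proof. by elim: s n => [|x s IH] [|n] //= lt_n; rewrite IH. Qed.

Lemma set_nth_catr (s r : board) n y :
  set_nth None (s ++ r) (size s + n) y = s ++ set_nth None r n y.
Proof. by elim: s => //= x s ->. Qed.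

Lemma clobber_move_catr p p' q : clobber_move p p' -> clobber_move (p ++ q) (p' ++ q).
Proof.
move=> [i [j [c [adj_ij [lt_i [lt_j [p_i [p_j ->]]]]]]]].
exists i, j, c; rewrite !size_cat !nth_cat lt_i lt_j.
do 5 (split; first by [|lia]).
by rewrite set_nth_catl // set_nth_catl // size_set_nth; lia.
Qed.

Lemma clobber_move_catl p q q' : clobber_move q q' -> clobber_move (p ++ q) (p ++ q').
Proof.
move=> [i [j [c [adj_ij [lt_i [lt_j [q_i [q_j ->]]]]]]]].
exists (size p + i), (size p + j), c; rewrite !size_cat !nth_cat !ltnNge !leq_addr /= !addKn.
do 5 (split; first by [|lia]).
by rewrite !set_nth_catr.
Qed.

Lemma reachable_cat p p' q q' :
  reachable p p' -> reachable q q' -> reachable (p ++ q) (p' ++ q').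
Proof.
move=> reach_p; elim=> [|q1 q2 _ IH move12]; last first.
  exact: reach_step IH (clobber_move_catl _ move12).
elim: reach_p => [|p1 p2 _ IH move12]; first exact: reach_refl.
exact: reach_step IH (clobber_move_catr _ move12).
Qed.

Lemma clobber_move_reachable b b' : clobber_move b b' -> reachable b b'.
Proof. exact: reach_step (reach_refl b). Qed.

Lemma ox_to_o : reachable (board_of (wpow [:: so; sx] 1)) ([:: None] ++ board_of [:: so]).
Proof. by apply: clobber_move_reachable; exists 0, 1, so; split; [left |]. Qed.

Lemma ox_to_x : reachable (board_of (wpow [:: so; sx] 1)) (board_of [:: sx] ++ [:: None]).
Proof. by apply: clobber_move_reachable; exists 1, 0, sx; split; [right |]. Qed.

Lemma oxox_to_xx :
  reachable (board_of (wpow [:: so; sx] 2)) ([:: Some so; None] ++ board_of [:: sx; sx]).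
Proof. by apply: clobber_move_reachable; exists 1, 2, sx; split; [left |]. Qed.

Lemma oxox_to_o :
  reachable (board_of (wpow [:: so; sx] 2)) (board_of [:: so] ++ [:: None; Some sx; Some sx]).
Proof. exact: oxox_to_xx. Qed.

Lemma oxox_to_x :
  reachable (board_of (wpow [:: so; sx] 2)) ([:: Some so; Some so; None] ++ board_of [:: sx]).
Proof. by apply: clobber_move_reachable; exists 2, 1, so; split; [right |]. Qed.

Lemma oxox_to_oo :
  reachable (board_of (wpow [:: so; sx] 2)) (board_of [:: so; so] ++ [:: None; Some sx]).
Proof. exact: oxox_to_x. Qed.

Definition appears (w : seq bool) : Prop :=
  exists s, famA s /\ exists b, reachable (board_of s) b /\ is_part b w.

(* [last None l = None] also holds for [l = [::]], and dually for [r]. *)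
Lemma appears_between a b t l p s r w :
    reachable (board_of (wpow [:: so; sx] a)) (l ++ board_of p) ->
    reachable (board_of (wpow [:: so; sx] b)) (board_of s ++ r) ->
    last None l = None -> head None r = None -> 0 < a + b -> p ++ s != [::] ->
  w = p ++ wpow [:: so; sx] t ++ s -> appears w.
Proof.
move=> reach_l reach_r l_end r_end ab_gt0 ps_nil ->.
exists (wpow [:: so; sx] (a + t + b)); split; first by exists (a + t + b); split=> //; lia.
exists (l ++ board_of (p ++ wpow [:: so; sx] t ++ s) ++ r); split.
  have reach_mid := reach_refl (board_of (wpow [:: so; sx] t)).
  have := reachable_cat reach_l (reachable_cat reach_mid reach_r).
  by rewrite /board_of !wpowD !map_cat !catA.
split; last by exists l, r; split=> //; split; right.
by move: ps_nil; rewrite -!size_eq0 !size_cat; lia.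
Qed.

Lemma appears_big_union w : big_union w -> appears w \/ appears (rev w).
Proof.
case=> [[n [n_gt0 ->]] | [[t ->] | [[t ->] | [[t ->] | [[t ->] | [[n [n_gt0 ->]] |
        [[_ [[t ->] ->]] | [[_ [[t ->] ->]] | [[_ [[t ->] ->]] | [_ [[t ->] ->]]]]]]]]]]].
- left; exists (wpow [:: so; sx] n); split; first by exists n.
  exists (board_of (wpow [:: so; sx] n)); split; first exact: reach_refl.
  split; last by exists [::], [::]; split; [rewrite cats0 | split; left].
  by rewrite -size_eq0 size_wpow; case: n n_gt0.
- by left; apply: (appears_between (a := 0) (l := [::]) (p := [::]) (t := t)
    (reach_refl _) oxox_to_o); words.
- by left; apply: (appears_between (b := 0) (s := [::]) (r := [::]) (t := t)
    ox_to_o (reach_refl _)); words.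
- by left; apply: (appears_between (t := t) ox_to_o oxox_to_o); words.
- by left; apply: (appears_between (t := t) ox_to_o oxox_to_oo); words.
- by left; apply: (appears_between (t := n) ox_to_o ox_to_x); words.
- by left; apply: (appears_between (b := 0) (s := [::]) (r := [::]) (t := t)
    oxox_to_x (reach_refl _)); words.
- by right; apply: (appears_between (a := 0) (l := [::]) (p := [::]) (t := t)
    (reach_refl _) ox_to_x); words.
- by left; apply: (appears_between (b := 0) (s := [::]) (r := [::]) (t := t)
    oxox_to_xx (reach_refl _)); words.
- by left; apply: (appears_between (t := t) oxox_to_xx ox_to_x); words.
Qed.

Theorem theorem1 (w : seq bool) :
  inU w <-> (nontrivial w /\ (big_union w \/ big_union (rev w))).
Proof.
split=> -[ntw games_w]; split=> //.
- case: games_w => _ [[n [_ ->]] [b [reach_b part_b]]].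
  have alt_b := board_inner_alternating_reachable reach_b
    (@board_inner_alternating_start n).
  apply: in_families_inner_alternating => //.
  by case: part_b => /(part_inner_alternating alt_b) // /inner_alternating_rev.
- have appears_w : appears w \/ appears (rev w).
    by case: games_w => /appears_big_union //; rewrite revK; tauto.
  by case: appears_w => -[s [famA_s [b [reach_b part_b]]]];
    exists s; split=> //; exists b; tauto.
Qed.
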